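(* Let $q>3$ be prime, $A\in\mathbb{F}_q[T]$ monic irreducible with $a=\deg A$, $t\in\mathbb{R}^\times$, and $\psi\in\mathcal{C}_0^\infty(\mathbb{R}_{>0})$. Define $H(s)=\sum_{n\in\mathbb{Z}}\psi(q^n)q^{-ns}$, $c(n,0,s)=q^{ns}+\frac{q^{n(1-s)+1-2as}}{1-q^{-2as}}$, and \[ \mathcal{I}_{1} = \log q \int_{-\frac{\pi i}{\log q}}^{\frac{\pi i}{\log q}} H(s) \sum_{n \in \mathbb{Z}} q^{ns} \left|c \left(n, 0, \tfrac{1}{2}+it \right) \right|^{2} \frac{ds}{2\pi i}, \] the contour being along the imaginary axis. Then $\mathcal{I}_1\ll 1$.
   Context: $c(n,0,s)$ is the constant term of the Fourier--Whittaker expansion at $\infty$ of the Eisenstein series $E(g,s)=\sum_{\gamma\in\Gamma_\infty\backslash\Gamma_0(A)}\left(|\det(\gamma g)|/h((0,1)\gamma g)^2\right)^s$ for $\Gamma_0(A)$ at $g=\begin{pmatrix}T^n&x\\0&1\end{pmatrix}$. The bound is uniform as $A$ varies. *)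

From Stdlib Require Import Reals.
From Coquelicot Require Import Coquelicot.
From mathcomp Require Import all_boot all_algebra.

Local Open Scope R_scope.

Definition qpow (q : R) (z : C) : C :=
  (exp (fst z * ln q) * cos (snd z * ln q), exp (fst z * ln q) * sin (snd z * ln q)).

Definition zpartial (f : Z -> C) (N : nat) : C :=
  List.fold_right Cplus (RtoC 0)
    (List.map (fun k => f (Z.sub (Z.of_nat k) (Z.of_nat N))) (List.seq 0 (Nat.add (Nat.mul 2 N) 1))).

(* sum over n in Z (limit of the symmetric partial sums; for finitely
   supported f this is the finite sum). *)
Definition zsum (f : Z -> C) : C :=
  (real (Lim_seq (fun N => fst (zpartial f N))), real (Lim_seq (fun N => snd (zpartial f N)))).

Definition cRInt (f : R -> C) (a b : R) : C :=
  (RInt (fun y => fst (f y)) a b, RInt (fun y => snd (f y)) a b).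

(* psi in C_0^infty(R_{>0}), extended by 0 to R. *)
Definition test_fun (psi : R -> C) : Prop :=
  (forall (k : nat) (x : R), ex_derive_n (fun y => fst (psi y)) k x
                         /\ ex_derive_n (fun y => snd (psi y)) k x) /\
  exists lo hi : R, 0 < lo /\ lo <= hi /\
    forall x : R, (x < lo \/ hi < x) -> psi x = RtoC 0.

Definition Hmel (q : R) (psi : R -> C) (s : C) : C :=
  zsum (fun n => Cmult (psi (powerRZ q n)) (qpow q (Copp (Cmult (RtoC (IZR n)) s)))).

Definition c0 (q : R) (a : nat) (n : Z) (s : C) : C :=
  Cplus (qpow q (Cmult (RtoC (IZR n)) s))
        (Cdiv (qpow q (Cplus (Cplus (Cmult (RtoC (IZR n)) (Cminus (RtoC 1) s)) (RtoC 1))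
                             (Copp (Cmult (RtoC (2 * INR a)) s))))
              (Cminus (RtoC 1) (qpow q (Copp (Cmult (RtoC (2 * INR a)) s))))).

(* I_1 = log q int_{-pi i/log q}^{pi i/log q} H(s) sum_n q^{ns} |c(n,0,1/2+it)|^2 ds/(2 pi i),
   along the imaginary axis s = i y (so ds/(2 pi i) = dy/(2 pi)), with the
   n-sum taken outside the integral. *)
Definition I1 (q : R) (a : nat) (psi : R -> C) (t : R) : C :=
  zsum (fun n =>
    Cmult (Cmult (RtoC (ln q))
            (cRInt (fun y => Cmult (Hmel q psi (0, y)) (qpow q (Cmult (RtoC (IZR n)) (0, y))))
                   (- PI / ln q) (PI / ln q)))
          (RtoC (/ (2 * PI) * (Cmod (c0 q a n (1/2, t))) ^ 2))).

(* On the imaginary axis, H(iy) = sum_m psi(q^m) q^(-imy) is a trigonometric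
   polynomial: psi has compact support in R_{>0}, so psi(q^m) vanishes for |m| large.
   Orthogonality of y |-> q^(iky) over the full period [-pi/log q, pi/log q] collapses
   the n-th term of I_1 to psi(q^n) |c(n,0,1/2+it)|^2, so I_1 is a finite sum over the
   support of psi.  Each |c(n,0,1/2+it)| is bounded independently of a >= 1, because
   |q^(-2as)| = q^(-a) <= 1/2 keeps the denominator 1 - q^(-2as) away from 0. *)

From Stdlib Require Import Reals Lra Lia.
From Coquelicot Require Import Coquelicot.

Local Open Scope R_scope.

Lemma fold_Cplus_acc (l : list C) (z : C) :
  List.fold_right Cplus z l = Cplus (List.fold_right Cplus (RtoC 0) l) z.
Proof.
  induction l as [|x l IH]; simpl.
  - now rewrite Cplus_0_l.
  - now rewrite IH, Cplus_assoc.
Qed.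

Lemma zpartial_ext (f g : Z -> C) (N : nat) :
  (forall n, f n = g n) -> zpartial f N = zpartial g N.
Proof. intros Hfg. unfold zpartial. f_equal. apply List.map_ext. intros k. apply Hfg. Qed.

Lemma zpartial_0 (f : Z -> C) : zpartial f 0 = f 0%Z.
Proof. unfold zpartial; simpl. now rewrite Cplus_0_r. Qed.

Lemma zpartial_S (f : Z -> C) (N : nat) :
  zpartial f (S N) =
  Cplus (f (- Z.of_nat (S N))%Z) (Cplus (zpartial f N) (f (Z.of_nat (S N)))).
Proof.
  unfold zpartial.
  replace (2 * S N + 1)%nat with (S (S (2 * N + 1))) by lia.
  change (List.seq 0 (S (S (2 * N + 1)))) with (0%nat :: List.seq 1 (S (2 * N + 1)))%list.
  rewrite (List.seq_S (2 * N + 1) 1), <- (List.seq_shift (2 * N + 1) 0).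
  rewrite List.map_cons, List.map_app, List.map_map; cbn [List.fold_right List.map].
  rewrite List.fold_right_app, fold_Cplus_acc; cbn [List.fold_right].
  rewrite Cplus_0_r.
  replace (Z.of_nat 0 - Z.of_nat (S N))%Z with (- Z.of_nat (S N))%Z by lia.
  replace (Z.of_nat (1 + (2 * N + 1)) - Z.of_nat (S N))%Z with (Z.of_nat (S N)) by lia.
  do 3 f_equal. apply List.map_ext. intros k. f_equal. lia.
Qed.

Section FiniteSupport.
Variables (f : Z -> C) (M : nat).
Hypothesis f_supp : forall n, (Z.of_nat M < Z.abs n)%Z -> f n = RtoC 0.

Lemma zpartial_stable (N : nat) : (M <= N)%nat -> zpartial f N = zpartial f M.
Proof.
  induction 1 as [|N HN IH]; [reflexivity|].
  rewrite zpartial_S, IH, !f_supp by lia.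
  now rewrite Cplus_0_l, Cplus_0_r.
Qed.

Lemma zsum_eq_zpartial : zsum f = zpartial f M.
Proof.
  unfold zsum.
  rewrite (Lim_seq_ext_loc _ (fun _ => fst (zpartial f M))),
    (Lim_seq_ext_loc (fun N => snd (zpartial f N)) (fun _ => snd (zpartial f M))),
    !Lim_seq_const.
  - now destruct (zpartial f M).
  - exists M. intros N HN. now rewrite zpartial_stable.
  - exists M. intros N HN. now rewrite zpartial_stable.
Qed.

End FiniteSupport.

Lemma zpartial_eq0 (f : Z -> C) (N : nat) :
  (forall n, (Z.abs n <= Z.of_nat N)%Z -> f n = RtoC 0) -> zpartial f N = RtoC 0.
Proof.
  induction N as [|N IH]; intros Hf.
  - rewrite zpartial_0. apply Hf. lia.
  - rewrite zpartial_S, IH by (intros; apply Hf; lia).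
    rewrite !Hf by lia. now rewrite !Cplus_0_l.
Qed.

Lemma zpartial_delta (g : Z -> C) (n : Z) (N : nat) : (Z.abs n <= Z.of_nat N)%Z ->
  zpartial (fun m => if Z.eq_dec (n - m) 0 then g m else RtoC 0) N = g n.
Proof.
  induction N as [|N IH]; intros Hn.
  - rewrite zpartial_0. replace n with 0%Z by lia. reflexivity.
  - rewrite zpartial_S.
    destruct (Z.eq_dec (n - - Z.of_nat (S N)) 0) as [E|E],
      (Z.eq_dec (n - Z.of_nat (S N)) 0) as [E'|E']; try lia.
    + rewrite zpartial_eq0, Cplus_0_l, Cplus_0_r.
      * f_equal; lia.
      * intros m Hm. destruct (Z.eq_dec (n - m) 0); [lia|reflexivity].
    + rewrite zpartial_eq0, Cplus_0_l, Cplus_0_l.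
      * f_equal; lia.
      * intros m Hm. destruct (Z.eq_dec (n - m) 0); [lia|reflexivity].
    + rewrite IH by lia. now rewrite Cplus_0_l, Cplus_0_r.
Qed.

Lemma zpartial_Cmult_r (f : Z -> C) (z : C) (N : nat) :
  Cmult (zpartial f N) z = zpartial (fun n => Cmult (f n) z) N.
Proof.
  induction N as [|N IH].
  - now rewrite !zpartial_0.
  - now rewrite !zpartial_S, !Cmult_plus_distr_r, IH.
Qed.

Lemma Cmod_zpartial_le (f : Z -> C) (b : Z -> R) (N : nat) :
  (forall n, Cmod (f n) <= b n) ->
  Cmod (zpartial f N) <= fst (zpartial (fun n => RtoC (b n)) N).
Proof.
  intros Hb. induction N as [|N IH].
  - rewrite !zpartial_0. apply Hb.
  - rewrite !zpartial_S; cbn [fst Cplus RtoC].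
    eapply Rle_trans; [apply Cmod_triangle|].
    eapply Rplus_le_compat; [apply Hb|].
    eapply Rle_trans; [apply Cmod_triangle|].
    now apply Rplus_le_compat.
Qed.

Lemma is_RInt_zpartial (f : Z -> R -> C) (v : Z -> C) (a b : R) (N : nat) :
  (forall m, is_RInt (f m) a b (v m)) ->
  is_RInt (fun y => zpartial (fun m => f m y) N) a b (zpartial v N).
Proof.
  intros Hf. induction N as [|N IH].
  - rewrite zpartial_0. eapply is_RInt_ext; [|apply Hf].
    intros y _. now rewrite zpartial_0.
  - rewrite zpartial_S.
    eapply is_RInt_ext; [intros y _; symmetry; apply zpartial_S|].
    apply (is_RInt_plus (V := C_R_NormedModule)); [apply Hf|].
    now apply (is_RInt_plus (V := C_R_NormedModule)).
Qed.

Lemma ln_gt_0 (x : R) : 1 < x -> 0 < ln x.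
Proof. intros Hx. rewrite <- ln_1. apply ln_increasing; lra. Qed.

Definition cis (x : R) : C := (cos x, sin x).

Lemma cis_add (x y : R) : Cmult (cis x) (cis y) = cis (x + y).
Proof.
  unfold cis, Cmult; cbn [fst snd].
  rewrite cos_plus, sin_plus. f_equal; ring.
Qed.

Lemma qpow_mult_imag (q r y : R) : qpow q (Cmult (RtoC r) (0, y)) = cis (r * ln q * y).
Proof.
  unfold qpow, Cmult, RtoC, cis; cbn [fst snd].
  replace ((r * 0 - 0 * y) * ln q) with 0 by ring.
  rewrite exp_0, !Rmult_1_l. f_equal; f_equal; ring.
Qed.

Lemma qpow_opp_mult_imag (q r y : R) :
  qpow q (Copp (Cmult (RtoC r) (0, y))) = cis (- (r * ln q * y)).
Proof.
  unfold qpow, Cmult, Copp, RtoC, cis; cbn [fst snd].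
  replace (- (r * 0 - 0 * y) * ln q) with 0 by ring.
  rewrite exp_0, !Rmult_1_l. f_equal; f_equal; ring.
Qed.

Lemma cRInt_is_RInt (f : R -> C) (a b : R) (l : C) :
  is_RInt f a b l -> cRInt f a b = l.
Proof.
  intros Hf. unfold cRInt. destruct l as [u v].
  f_equal; apply is_RInt_unique.
  - exact (is_RInt_fct_extend_fst _ _ _ _ Hf).
  - exact (is_RInt_fct_extend_snd _ _ _ _ Hf).
Qed.

(* [y |-> e^{i k L y}] runs through [k] full periods on [[-pi/L, pi/L]]. *)
Lemma is_RInt_trig_periods (L : R) (k : Z) (u v : R) : 0 < L -> k <> 0%Z ->
  is_RInt (fun y => u * cos (IZR k * L * y) + v * sin (IZR k * L * y))
    (- PI / L) (PI / L) 0.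
Proof.
  intros HL Hk.
  assert (Hk' : IZR k <> 0) by now apply not_0_IZR.
  set (F := fun y => (u * sin (IZR k * L * y) - v * cos (IZR k * L * y)) / (IZR k * L)).
  replace 0 with (minus (F (PI / L)) (F (- PI / L))).
  - apply (is_RInt_derive (V := R_CompleteNormedModule)).
    + intros y _. unfold F. auto_derive; [trivial|]. field. split; lra.
    + intros y _. apply (ex_derive_continuous (V := R_NormedModule)).
      auto_derive. trivial.
  - unfold F, minus, plus, opp; cbn.
    replace (IZR k * L * (PI / L)) with (IZR k * PI) by (field; lra).
    replace (IZR k * L * (- PI / L)) with (- (IZR k * PI)) by (field; lra).
    rewrite sin_neg, cos_neg, (sin_eq_0_1 (IZR k * PI)) by now exists k.
    field. split; lra.
Qed.

Lemma is_RInt_cis_periods (L : R) (k : Z) (c : C) : 0 < L ->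
  is_RInt (fun y => Cmult c (cis (IZR k * L * y))) (- PI / L) (PI / L)
    (if Z.eq_dec k 0 then Cmult (RtoC (2 * PI / L)) c else RtoC 0).
Proof.
  intros HL. destruct c as [u v]. destruct (Z.eq_dec k 0) as [->|Hk].
  - replace (Cmult (RtoC (2 * PI / L)) (u, v))
      with (scal (PI / L - - PI / L) u, scal (PI / L - - PI / L) v)
      by (unfold scal, RtoC, Cmult; simpl; unfold mult; simpl; f_equal; field; lra).
    apply is_RInt_fct_extend_pair.
    + apply (is_RInt_ext (fun _ => u)); [|exact (is_RInt_const (V := R_NormedModule) _ _ _)].
      intros y _. unfold cis, Cmult; simpl. rewrite !Rmult_0_l, cos_0, sin_0. ring.
    + apply (is_RInt_ext (fun _ => v)); [|exact (is_RInt_const (V := R_NormedModule) _ _ _)].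
      intros y _. unfold cis, Cmult; simpl. rewrite !Rmult_0_l, cos_0, sin_0. ring.
  - apply is_RInt_fct_extend_pair.
    + apply (is_RInt_ext (fun y => u * cos (IZR k * L * y) + (- v) * sin (IZR k * L * y))).
      * intros y _. unfold cis, Cmult; simpl. ring.
      * now apply is_RInt_trig_periods.
    + apply (is_RInt_ext (fun y => v * cos (IZR k * L * y) + u * sin (IZR k * L * y))).
      * intros y _. unfold cis, Cmult; simpl. ring.
      * now apply is_RInt_trig_periods.
Qed.

Lemma test_fun_powerRZ_support (psi : R -> C) (q : R) : test_fun psi -> 1 < q ->
  exists M : nat, forall m, (Z.of_nat M < Z.abs m)%Z -> psi (powerRZ q m) = RtoC 0.
Proof.
  intros [_ [lo [hi [Hlo [_ Hout]]]]] Hq.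
  destruct (Pow_x_infinity q) with (b := Rmax hi (/ lo) + 1) as [M HM].
  { rewrite Rabs_right; lra. }
  assert (Hbig : forall p : positive, (M < Pos.to_nat p)%nat ->
            hi < q ^ Pos.to_nat p /\ / lo < q ^ Pos.to_nat p).
  { intros p Hp. specialize (HM (Pos.to_nat p) ltac:(lia)).
    rewrite Rabs_right in HM by (apply Rle_ge, pow_le; lra).
    assert (Hl := Rmax_l hi (/ lo)). assert (Hr := Rmax_r hi (/ lo)). lra. }
  exists M. intros m Hm. apply Hout.
  destruct m as [|p|p]; simpl in Hm |- *; [lia| |].
  - right. apply Hbig. lia.
  - left. destruct (Hbig p ltac:(lia)) as [_ Hp].
    rewrite <- (Rinv_inv lo). apply Rinv_lt_contravar; [|exact Hp].
    apply Rmult_lt_0_compat; [apply Rinv_0_lt_compat; lra|apply pow_lt; lra].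
Qed.

Section Orthogonality.
Variables (q : R) (psi : R -> C) (M : nat).
Hypothesis q_gt1 : 1 < q.
Hypothesis psi_supp : forall m, (Z.of_nat M < Z.abs m)%Z -> psi (powerRZ q m) = RtoC 0.

Lemma Hmel_imag_mult_qpow (n : Z) (N : nat) (y : R) : (M <= N)%nat ->
  Cmult (Hmel q psi (0, y)) (qpow q (Cmult (RtoC (IZR n)) (0, y))) =
  zpartial (fun m => Cmult (psi (powerRZ q m)) (cis (IZR (n - m) * ln q * y))) N.
Proof.
  intros HN. unfold Hmel.
  rewrite (zsum_eq_zpartial _ N), zpartial_Cmult_r.
  - apply zpartial_ext. intros m.
    rewrite <- Cmult_assoc, qpow_opp_mult_imag, qpow_mult_imag, cis_add.
    f_equal. f_equal. rewrite minus_IZR. ring.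
  - intros m Hm. rewrite psi_supp by lia. apply Cmult_0_l.
Qed.

Lemma cRInt_Hmel_imag_mult_qpow (n : Z) :
  cRInt (fun y => Cmult (Hmel q psi (0, y)) (qpow q (Cmult (RtoC (IZR n)) (0, y))))
    (- PI / ln q) (PI / ln q) = Cmult (RtoC (2 * PI / ln q)) (psi (powerRZ q n)).
Proof.
  set (N := Nat.max M (Z.abs_nat n)).
  apply cRInt_is_RInt.
  eapply is_RInt_ext; [intros y _; symmetry; apply (Hmel_imag_mult_qpow n N); lia|].
  rewrite <- (zpartial_delta (fun m => Cmult (RtoC (2 * PI / ln q)) (psi (powerRZ q m))) n N)
    by lia.
  apply is_RInt_zpartial. intros m.
  exact (is_RInt_cis_periods (ln q) (n - m) _ (ln_gt_0 q q_gt1)).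
Qed.

End Orthogonality.

Lemma I1_eq_zsum (q : R) (a : nat) (psi : R -> C) (t : R) (M : nat) : 1 < q ->
  (forall m, (Z.of_nat M < Z.abs m)%Z -> psi (powerRZ q m) = RtoC 0) ->
  I1 q a psi t = zsum (fun n => Cmult (psi (powerRZ q n)) (RtoC (Cmod (c0 q a n (1/2, t)) ^ 2))).
Proof.
  intros Hq Hsupp.
  assert (HL := ln_gt_0 q Hq).
  assert (Hterm : forall n,
    Cmult (Cmult (RtoC (ln q))
            (cRInt (fun y => Cmult (Hmel q psi (0, y)) (qpow q (Cmult (RtoC (IZR n)) (0, y))))
                   (- PI / ln q) (PI / ln q)))
          (RtoC (/ (2 * PI) * (Cmod (c0 q a n (1/2, t))) ^ 2))
    = Cmult (psi (powerRZ q n)) (RtoC (Cmod (c0 q a n (1/2, t)) ^ 2))).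
  { intros n. rewrite (cRInt_Hmel_imag_mult_qpow q psi M Hq Hsupp).
    destruct (psi (powerRZ q n)) as [u v]. unfold Cmult, RtoC; simpl.
    assert (HPI := PI_RGT_0). f_equal; field; lra. }
  unfold I1. rewrite !(zsum_eq_zpartial _ M).
  - now apply zpartial_ext.
  - intros n Hn. rewrite Hsupp by exact Hn. apply Cmult_0_l.
  - intros n Hn. rewrite Hterm, Hsupp by exact Hn. apply Cmult_0_l.
Qed.

Lemma exp_le_exp (x y : R) : x <= y -> exp x <= exp y.
Proof.
  intros [Hlt|Heq]; [left; now apply exp_increasing|right; now rewrite Heq].
Qed.

Lemma Cmod_qpow (q : R) (z : C) : Cmod (qpow q z) = exp (fst z * ln q).
Proof.
  unfold Cmod, qpow; cbn [fst snd].
  set (e := exp (fst z * ln q)). set (u := snd z * ln q).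
  replace ((e * cos u) ^ 2 + (e * sin u) ^ 2) with (Rsqr e).
  - apply sqrt_Rsqr. left. apply exp_pos.
  - assert (H := sin2_cos2 u). unfold Rsqr in *. nra.
Qed.

Lemma Cmod_qpow_le (q x : R) (z : C) : 1 < q -> fst z <= x ->
  Cmod (qpow q z) <= exp (x * ln q).
Proof.
  intros Hq Hz. rewrite Cmod_qpow. apply exp_le_exp.
  apply Rmult_le_compat_r; [left; now apply ln_gt_0|exact Hz].
Qed.

Lemma Cmod_1_minus_ge (w : C) : 1 - Cmod w <= Cmod (Cminus (RtoC 1) w).
Proof.
  assert (H := Cmod_triangle (Cminus (RtoC 1) w) w).
  replace (Cplus (Cminus (RtoC 1) w) w) with (RtoC 1) in H by ring.
  rewrite Cmod_1 in H. lra.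
Qed.

Lemma Cmod_c0_le (q : R) (a : nat) (n : Z) (t : R) : 2 <= q -> (1 <= a)%nat ->
  Cmod (c0 q a n (1/2, t)) <= 3 * exp (Rabs (IZR n) * ln q).
Proof.
  intros Hq Ha.
  assert (Ha1 : 1 <= INR a) by now apply (le_INR 1).
  assert (Hn := Rle_abs (IZR n)). assert (Hn0 := Rabs_pos (IZR n)).
  set (E := exp (Rabs (IZR n) * ln q)).
  set (w := qpow q (Copp (Cmult (RtoC (2 * INR a)) (1/2, t)))).
  assert (Hw : Cmod w <= / 2).
  { apply Rle_trans with (exp (- 1 * ln q)).
    - apply Cmod_qpow_le; simpl; lra.
    - replace (- 1 * ln q) with (- ln q) by ring.
      rewrite exp_Ropp, exp_ln by lra.
      apply Rinv_le_contravar; lra. }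
  assert (Hden : / 2 <= Cmod (Cminus (RtoC 1) w))
    by (assert (Hd := Cmod_1_minus_ge w); lra).
  assert (H1 : Cmod (qpow q (Cmult (RtoC (IZR n)) (1/2, t))) <= E)
    by (apply Cmod_qpow_le; simpl; lra).
  assert (H2 : Cmod (qpow q (Cplus (Cplus (Cmult (RtoC (IZR n)) (Cminus (RtoC 1) (1/2, t)))
                                         (RtoC 1))
                                  (Copp (Cmult (RtoC (2 * INR a)) (1/2, t))))) <= E)
    by (apply Cmod_qpow_le; simpl; lra).
  unfold c0. fold w.
  eapply Rle_trans; [apply Cmod_triangle|].
  rewrite Cmod_div by (intros Hw0; rewrite Hw0, Cmod_0 in Hden; lra).
  assert (Hinv : / Cmod (Cminus (RtoC 1) w) <= 2).
  { rewrite <- (Rinv_inv 2). apply Rinv_le_contravar; lra. }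
  unfold Rdiv. apply Rle_trans with (E + E * 2); [|lra].
  apply Rplus_le_compat; [exact H1|].
  apply Rmult_le_compat; [apply Cmod_ge_0|left; apply Rinv_0_lt_compat; lra|exact H2|exact Hinv].
Qed.

Lemma I1_bounded_uniformly (q : R) (psi : R -> C) (t : R) : 2 <= q -> test_fun psi ->
  exists K, forall a : nat, (1 <= a)%nat -> Cmod (I1 q a psi t) <= K.
Proof.
  intros Hq Hpsi.
  destruct (test_fun_powerRZ_support psi q Hpsi) as [M Hsupp]; [lra|].
  set (b := fun n : Z => Cmod (psi (powerRZ q n)) * (3 * exp (Rabs (IZR n) * ln q)) ^ 2).
  exists (fst (zpartial (fun n => RtoC (b n)) M)). intros a Ha.
  rewrite (I1_eq_zsum q a psi t M), (zsum_eq_zpartial _ M); [| |lra|exact Hsupp].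
  2:{ intros n Hn. rewrite Hsupp by exact Hn. apply Cmult_0_l. }
  apply Cmod_zpartial_le. intros n. unfold b.
  rewrite Cmod_mult, Cmod_R, Rabs_right by (apply Rle_ge, pow2_ge_0).
  apply Rmult_le_compat_l; [apply Cmod_ge_0|].
  apply pow_incr. split; [apply Cmod_ge_0|]. now apply Cmod_c0_le.
Qed.

From mathcomp Require Import all_boot all_algebra.

Theorem lemma3p7 (q : nat) (hq : prime q) (hq3 : (3 < q)%N)
    (psi : R -> C) (hpsi : test_fun psi) (t : R) (ht : t <> R0) :
  exists K : R, forall A : {poly 'F_q},
    A \is monic -> irreducible_poly A ->
    Rle (Cmod (I1 (INR q) (size A).-1 psi t)) K.
Proof.
  have q_ge4 : (4 <= q)%coq_nat by apply/leP.
  have q_ge2 : 2 <= INR q by apply le_INR in q_ge4; simpl in q_ge4; lra.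
  have [K HK] := I1_bounded_uniformly (INR q) psi t q_ge2 hpsi.
  exists K => A _ [size_gt1 _].
  apply: HK. apply/leP. by rewrite -ltnS prednK // ltnW.
Qed.
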